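(* For all $\boldsymbol{Y} \in \mathbb{Y}_{SP}^L(R,\tau_s,\tau_r)$ there exists a regular pair $\{Z,G\}$ such that $\boldsymbol{Y} = \boldsymbol{F}_\ell(Z,G)$.
   Context: A self-powered synthetic admittance $\boldsymbol{Y}$ imposes $u(t) = -(\boldsymbol{Y}v)(t)$, where $v(t)\in\mathbb{R}^{n_p}$ are port voltages and $u(t)\in\mathbb{R}^{n_p}$ port currents. Let $R=\mathrm{diag}\{R_1,\dots,R_{n_p}\}>0$, $\tau_r>0$, $\tau_s>0$ be loss parameters, $P_e(t) = u^T(t)v(t)+u^T(t)Ru(t)$, and let the stored energy $E_s(t)$ obey $\tfrac{d}{dt}E_s = -(\tfrac{2}{\tau_s}+\tfrac{1}{\tau_r})E_s + \sqrt{(\tfrac{1}{\tau_r}E_s)^2 - \tfrac{2}{\tau_r}E_sP_e}$. Given $v\in\mathbb{L}_{2e}^+$, $\mathbb{U}_{SP}(v;R,\tau_s,\tau_r)$ is the set of all $u\in\mathbb{L}_{2e}^+$ for which this equation has a unique solution with $E_s(t)>0$ for all $t>0$, for each $E_s(0)>0$. $\mathbb{Y}_{SP}(R,\tau_s,\tau_r)$ is the set of all $\boldsymbol{Y}$ with $-\boldsymbol{Y}v\in\mathbb{U}_{SP}(v;R,\tau_s,\tau_r)$ for all $v\in\mathbb{L}_{2e}^+$. Let $\mathbb{T} = \{(t,\theta): t\geqslant\theta\geqslant 0\}$; a kernel $K$ is in $\mathbb{D}$ if $K(t,\cdot)\in\mathbb{L}_2([0,t])$ for all $t>0$, $K(\cdot,\theta)\in\mathbb{L}_{2e}([\theta,\infty))$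 for all $\theta>0$, and $K\in\mathbb{L}_{2e}(\mathbb{T})$. A pair $\{Y_0,Y_1\}$ is regular if $Y_0\in\mathbb{L}_\infty^+$ and $Y_1\in\mathbb{D}$; $(\boldsymbol{S}(Y_0,Y_1)v)(t) = Y_0(t)v(t) + \int_0^tY_1(t,\theta)v(\theta)d\theta$. $\mathbb{Y}_{SP}^L(R,\tau_s,\tau_r)$ is the largest subset of $\mathbb{Y}_{SP}(R,\tau_s,\tau_r)$ each element of which equals $\boldsymbol{S}(Y_0,Y_1)$ for some regular $\{Y_0,Y_1\}$. $\boldsymbol{F}_\ell(Z,G)$ is the map $v\mapsto -u$ defined by $\begin{bmatrix} u(t)\\ q(t)\end{bmatrix} = -Z(t)\begin{bmatrix} v(t)\\ r(t)\end{bmatrix}$, $r(t)=\int_0^tG(t,\theta)q(\theta)d\theta$ with auxiliary signals $q,r$; $\{Z,G\}$ is regular if $Z\in\mathbb{L}_\infty^+$ and $G\in\mathbb{D}$. *)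

From HB Require Import structures.
From mathcomp Require Import all_boot all_order all_algebra.
From mathcomp Require Import all_classical all_reals all_analysis.
Set Implicit Arguments.
Unset Strict Implicit.
Unset Printing Implicit Defensive.
Import Order.TTheory GRing.Theory Num.Def Num.Theory.
Import numFieldNormedType.Exports.
Local Open Scope classical_set_scope.
Local Open Scope ring_scope.

Section SyntheticAdmittance.
Variable R : realType.
Local Notation mu := (@lebesgue_measure R).
Local Notation Rplus := (`[(0:R), +oo[%classic : set R).
Local Notation cI a b := (`[(a:R), (b:R)]%classic : set R).

Definition sqnorm p q (A : 'M[R]_(p, q)) : R := \sum_i \sum_j (A i j) ^+ 2.

Definition L2on {d} {T : measurableType d} (m : {measure set T -> \bar R})
  p q (D : set T) (f : T -> 'M[R]_(p, q)) : Prop :=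
  (forall i j, measurable_fun D (fun t => f t i j)) /\
  (\int[m]_(t in D) (sqnorm (f t))%:E < +oo)%E.

Definition L2e0 p q (f : R -> 'M[R]_(p, q)) : Prop :=
  forall T : R, 0 < T -> L2on mu (cI 0 T) f.

Definition Linf0 p q (Z : R -> 'M[R]_(p, q)) : Prop :=
  (forall i j, measurable_fun Rplus (fun t => Z t i j)) /\
  exists M : R, {ae mu, forall t, Rplus t -> forall i j, `|Z t i j| <= M}.

Definition tri (T0 : R) : set (R * R) :=
  [set x | 0 <= x.2 /\ x.2 <= x.1 /\ x.1 <= T0].

Definition kerD p q (K : R -> R -> 'M[R]_(p, q)) : Prop :=
  (forall t, 0 < t -> L2on mu (cI 0 t) (K t)) /\
  (forall th, 0 < th -> forall T0, th < T0 -> L2on mu (cI th T0) (fun t => K t th)) /\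
  (forall T0, 0 < T0 -> L2on (mu \x mu)%E (tri T0) (fun x => K x.1 x.2)).

Definition volterra p q (K : R -> R -> 'M[R]_(p, q)) (x : R -> 'cV[R]_q)
  (t : R) : 'cV[R]_p :=
  \col_i Rintegral mu (cI 0 t) (fun th => (K t th *m x th) i 0).

(* Equality almost everywhere on [0, oo) (equality in L_{2e}^+). *)
Definition aeq0 p q (f g : R -> 'M[R]_(p, q)) : Prop :=
  {ae mu, forall t, Rplus t -> f t = g t}.

Definition sigop (n : nat) := (R -> 'cV[R]_n) -> (R -> 'cV[R]_n).

Definition Sop n (Y0 : R -> 'M[R]_n) (Y1 : R -> R -> 'M[R]_n) : sigop n :=
  fun v t => Y0 t *m v t + volterra Y1 v t.

Definition regular_pair n (Y0 : R -> 'M[R]_n) (Y1 : R -> R -> 'M[R]_n) : Prop :=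
  Linf0 Y0 /\ kerD Y1.

(* Loss parameters: Rd is the diagonal of R = diag{R_1, ..., R_np}. *)
Definition Pe n (Rd : 'rV[R]_n) (u v : R -> 'cV[R]_n) (t : R) : R :=
  ((u t)^T *m v t) 0 0 + ((u t)^T *m diag_mx Rd *m u t) 0 0.

Definition Es_rad n (Rd : 'rV[R]_n) (tr : R) (u v : R -> 'cV[R]_n)
  (s E : R) : R :=
  (tr^-1 * E) ^+ 2 - 2 / tr * E * Pe Rd u v s.

Definition Es_rhs n (Rd : 'rV[R]_n) (ts tr : R) (u v : R -> 'cV[R]_n)
  (s E : R) : R :=
  - (2 / ts + tr^-1) * E + Num.sqrt (Es_rad Rd tr u v s E).

(* E is a (Caratheodory) solution on [0, oo) of the stored-energy equation
   with initial value E0: the right-hand side is real (nonnegative radicand)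
   almost everywhere, locally integrable, and E is its integral. *)
Definition Es_solution n (Rd : 'rV[R]_n) (ts tr : R) (u v : R -> 'cV[R]_n)
  (E0 : R) (E : R -> R) : Prop :=
  E 0 = E0 /\
  {ae mu, forall s, Rplus s -> 0 <= Es_rad Rd tr u v s (E s)} /\
  forall t, 0 <= t ->
    mu.-integrable (cI 0 t) (fun s => (Es_rhs Rd ts tr u v s (E s))%:E) /\
    E t = E0 + Rintegral mu (cI 0 t) (fun s => Es_rhs Rd ts tr u v s (E s)).

Definition U_SP n (Rd : 'rV[R]_n) (ts tr : R) (v u : R -> 'cV[R]_n) : Prop :=
  L2e0 u /\
  forall E0, 0 < E0 ->
    exists E, Es_solution Rd ts tr u v E0 E /\
      (forall t, 0 < t -> 0 < E t) /\
      (forall E', Es_solution Rd ts tr u v E0 E' ->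
         forall t, 0 <= t -> E' t = E t).

Definition Y_SP n (Rd : 'rV[R]_n) (ts tr : R) (Y : sigop n) : Prop :=
  forall v, L2e0 v -> U_SP Rd ts tr v (fun t => - Y v t).

Definition Y_SPL n (Rd : 'rV[R]_n) (ts tr : R) (Y : sigop n) : Prop :=
  Y_SP Rd ts tr Y /\
  exists (Y0 : R -> 'M[R]_n) (Y1 : R -> R -> 'M[R]_n),
    regular_pair Y0 Y1 /\ forall v, L2e0 v -> aeq0 (Y v) (Sop Y0 Y1 v).

Definition Fl_solves n m (Z : R -> 'M[R]_(n + m)) (G : R -> R -> 'M[R]_m)
  (v u : R -> 'cV[R]_n) (q r : R -> 'cV[R]_m) : Prop :=
  L2e0 u /\ L2e0 q /\
  (forall t, 0 <= t -> r t = volterra G q t) /\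
  aeq0 (fun t => col_mx (u t) (q t)) (fun t => - (Z t *m col_mx (v t) (r t))).

(* Y = F_l(Z, G): for every v in L_{2e}^+ the loop equations are solvable and
   every solution yields -u = Y v (so F_l(Z,G) is a well-defined map equal to Y). *)
Definition is_Fl n m (Y : sigop n) (Z : R -> 'M[R]_(n + m))
  (G : R -> R -> 'M[R]_m) : Prop :=
  forall v, L2e0 v ->
    (exists u q r, Fl_solves Z G v u q r) /\
    (forall u q r, Fl_solves Z G v u q r -> aeq0 (Y v) (fun t => - u t)).

Definition regular_ZG n m (Z : R -> 'M[R]_(n + m)) (G : R -> R -> 'M[R]_m) : Prop :=
  Linf0 Z /\ kerD G.

End SyntheticAdmittance.

From HB Require Import structures.
From mathcomp Require Import all_boot all_order all_algebra.
From mathcomp Require Import all_classical all_reals all_analysis.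
Set Implicit Arguments.
Unset Strict Implicit.
Unset Printing Implicit Defensive.
Import Order.TTheory GRing.Theory Num.Def Num.Theory.
Local Open Scope ring_scope.

(* Any S(Y0, Y1) is realised by the linear fractional transformation with
   Z = [[Y0, I], [-I, 0]] and G = Y1: the lower loop forces q = v, hence
   r = int_0^t Y1(t, th) v(th) dth, and the upper row returns
   -u = Y0 v + r = S(Y0, Y1) v.  Regularity of {Z, G} is inherited from that
   of {Y0, Y1}. *)

Section Entrywise.
Variable R : realType.

Lemma block_mx_entrywise (T : Type) (P : (T -> R) -> Prop) m1 m2 n1 n2
    (A : T -> 'M[R]_(m1, n1)) (B : T -> 'M[R]_(m1, n2))
    (C : T -> 'M[R]_(m2, n1)) (D : T -> 'M[R]_(m2, n2)) :
  (forall i j, P (fun t => A t i j)) -> (forall i j, P (fun t => B t i j)) ->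
  (forall i j, P (fun t => C t i j)) -> (forall i j, P (fun t => D t i j)) ->
  forall i j, P (fun t => block_mx (A t) (B t) (C t) (D t) i j).
Proof.
move=> PA PB PC PD i j.
rewrite -(splitK i) -(splitK j).
case: (fintype.split i) => i'; case: (fintype.split j) => j' /=.
- by under eq_fun do rewrite block_mxEul.
- by under eq_fun do rewrite block_mxEur.
- by under eq_fun do rewrite block_mxEdl.
- by under eq_fun do rewrite block_mxEdr.
Qed.

Lemma measurable_mulmx d (T : measurableType d) (D : set T) p q r
    (A : T -> 'M[R]_(p, q)) (B : T -> 'M[R]_(q, r)) :
  (forall i j, measurable_fun D (fun t => A t i j)) ->
  (forall i j, measurable_fun D (fun t => B t i j)) ->
  forall i j, measurable_fun D (fun t => (A t *m B t) i j).
Proof.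
move=> mA mB i j.
under eq_fun do rewrite mxE.
apply: measurable_sum => k.
exact: measurable_realfun.measurable_funM.
Qed.

End Entrywise.

Section Signals.
Variable R : realType.
Local Notation mu := (@lebesgue_measure R).

Lemma Linf0_cst p q (A : 'M[R]_(p, q)) : Linf0 (fun=> A).
Proof.
split=> [i j|]; first exact: measurable_cst.
exists (\big[Num.max/0]_ij `|A ij.1 ij.2|).
by apply: nearW => t _ i j; exact: (le_bigmax _ _ (i, j)).
Qed.

Lemma Linf0_block m1 m2 n1 n2
    (A : R -> 'M[R]_(m1, n1)) (B : R -> 'M[R]_(m1, n2))
    (C : R -> 'M[R]_(m2, n1)) (D : R -> 'M[R]_(m2, n2)) :
  Linf0 A -> Linf0 B -> Linf0 C -> Linf0 D ->
  Linf0 (fun t => block_mx (A t) (B t) (C t) (D t)).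
Proof.
move=> [mA [a ha]] [mB [b hb]] [mC [c hc]] [mD [d hd]].
split; first exact: block_mx_entrywise.
exists (Num.max (Num.max a b) (Num.max c d)).
have aeF := ae_filter_ringOfSetsType mu.
apply: filterS (filterI (filterI ha hb) (filterI hc hd)).
move=> t [[Ha Hb] [Hc Hd]] Ht.
apply: (block_mx_entrywise
  (P := fun f => `|f t| <= Num.max (Num.max a b) (Num.max c d))) => i j.
- by rewrite !le_max Ha.
- by rewrite !le_max Hb ?orbT.
- by rewrite !le_max Hc ?orbT.
- by rewrite !le_max Hd ?orbT.
Qed.

Lemma aeq0_trans p q (f g h : R -> 'M[R]_(p, q)) :
  aeq0 f g -> aeq0 g h -> aeq0 f h.
Proof.
have aeF := ae_filter_ringOfSetsType mu.
by apply: filterS2 => t fg gh Ht; rewrite fg ?gh.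
Qed.

Lemma volterra_aeq0 p q (K : R -> R -> 'M[R]_(p, q)) (x y : R -> 'cV[R]_q) :
  kerD K -> L2e0 x -> L2e0 y -> aeq0 x y ->
  forall t, 0 <= t -> volterra K x t = volterra K y t.
Proof.
move=> [K2 _] x2 y2 xy t; rewrite le_eqVlt => /predU1P[<-|t_gt0].
  by apply/matrixP => i j; rewrite !mxE set_itv1 !Rintegral_set1.
have measurable_integrand (z : R -> 'cV[R]_q) i : L2e0 z ->
    measurable_fun `[0, t]%classic (fun th => (K t th *m z th) i 0).
  by move=> z2; exact: measurable_mulmx (K2 t t_gt0).1 (z2 t t_gt0).1 _ _.
apply/matrixP => i j; rewrite !mxE /Rintegral; congr fine.
apply: ae_eq_integral => //;
  [apply/measurable_realfun.measurable_EFinP; exact: measurable_integrand..|].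
have aeF := ae_filter_ringOfSetsType mu.
apply: filterS xy => th xy_th; rewrite /= in_itv /= => /andP[th_ge0 _].
by rewrite xy_th //= in_itv /= th_ge0.
Qed.

End Signals.

Section Loop.
Variables (R : realType) (n : nat).

Definition loop_mx (Y0 : 'M[R]_n) : 'M[R]_(n + n) := block_mx Y0 1%:M (- 1%:M) 0.

Lemma loop_mx_mul Y0 (v r : 'cV[R]_n) :
  - (loop_mx Y0 *m col_mx v r) = col_mx (- (Y0 *m v + r)) v.
Proof.
by rewrite mul_block_col mul1mx mul0mx addr0 mulNmx mul1mx opp_col_mx opprK.
Qed.

Variables (Y0 : R -> 'M[R]_n) (Y1 : R -> R -> 'M[R]_n) (v : R -> 'cV[R]_n).
Let Z t := loop_mx (Y0 t).

Lemma loop_Fl_solves (u : R -> 'cV[R]_n) :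
  L2e0 u -> L2e0 v -> aeq0 (fun t => - u t) (Sop Y0 Y1 v) ->
  Fl_solves Z Y1 v u v (volterra Y1 v).
Proof.
move=> u2 v2 uS; do 3!split => //.
have aeF := ae_filter_ringOfSetsType (@lebesgue_measure R).
apply: filterS uS => t uS_t Ht.
by rewrite loop_mx_mul -[_ + _]/(Sop Y0 Y1 v t) -uS_t // opprK.
Qed.

Lemma loop_Fl_output (u q r : R -> 'cV[R]_n) :
  kerD Y1 -> L2e0 v -> Fl_solves Z Y1 v u q r ->
  aeq0 (fun t => - u t) (Sop Y0 Y1 v).
Proof.
move=> Y1_ker v2 [_ [q2 [r_def uq]]].
have aeF := ae_filter_ringOfSetsType (@lebesgue_measure R).
have [uE qE] : aeq0 u (fun t => - (Y0 t *m v t + r t)) /\ aeq0 q v.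
  by split; apply: filterS uq => t uq_t Ht;
    move: (uq_t Ht); rewrite loop_mx_mul => /eq_col_mx[].
apply: filterS uE => t uE_t Ht.
have t_ge0 : 0 <= t by move: Ht; rewrite /= in_itv /= andbT.
by rewrite uE_t // opprK r_def // (volterra_aeq0 Y1_ker q2 v2 qE).
Qed.

End Loop.

Theorem corollary1 (R : realType) (n : nat) (Rd : 'rV[R]_n) (ts tr : R)
  (HRd : forall i, 0 < Rd 0 i) (Hts : 0 < ts) (Htr : 0 < tr)
  (Y : sigop R n) :
  Y_SPL Rd ts tr Y ->
  exists (m : nat) (Z : R -> 'M[R]_(n + m)) (G : R -> R -> 'M[R]_m),
    regular_ZG Z G /\ is_Fl Y Z G.
Proof.
move=> [Y_SP [Y0 [Y1 [[Y0_inf Y1_ker] YS]]]].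
exists n, (fun t => loop_mx (Y0 t)), Y1; split.
  split=> //; apply: Linf0_block => //; exact: Linf0_cst.
have aeF := ae_filter_ringOfSetsType (@lebesgue_measure R).
move=> v v2; split.
  (* u := -Y v rather than -S(Y0, Y1) v, because Y_SP already puts Y v in L_2e. *)
  exists (fun t => - Y v t), v, (volterra Y1 v).
  apply: loop_Fl_solves => //; first by case: (Y_SP v v2).
  by apply: filterS (YS v v2) => t YS_t Ht; rewrite opprK YS_t.
move=> u q r sol.
apply: aeq0_trans (YS v v2) _.
apply: filterS (loop_Fl_output Y1_ker v2 sol) => t uS_t Ht.
by rewrite -uS_t.
Qed.
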